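(* Let $G$ be a SIN topological group, $X$ a Hausdorff space, $\xi=(E\xrightarrow{p}X)$ a numerable principal $G$-bundle, $C$ an $X$-groupoid with $\Omega_C=C_*^*$ for a base point $*\in X$. Then the topologies on the gauge group $\mathcal G$, on the space $\mathcal R(C,\xi)$ of representations and on $\mathcal R(\Omega_C,G)$ induced by the uniform structures $\mathbf U_{\mathcal G}$, $\mathbf U_{\mathcal R(C,\xi)}$ and $\mathbf U_{\mathcal R}$ coincide with the compact-open topologies (as subspaces of $\mathrm{map}(E,E)$, $\mathrm{map}(C\times_XE,E)$ and $\mathrm{map}(\Omega_C,G)$ respectively).
   Context: SIN: the identity has a fundamental system of conjugation-invariant neighbourhoods. $X$-groupoid: a space $C$ with continuous source/target $\alpha,\beta:C\to X$, continuous associative partial composition on $\{(c_1,c_2):\alpha(c_1)=\beta(c_2)\}$ with $\alpha(c_1c_2)=\alpha(c_2)$, $\beta(c_1c_2)=\beta(c_1)$, continuous units and continuous inversion; $C_x=\alpha^{-1}(x)$, $C^y=\beta^{-1}(y)$. A representation of $C$ on $\xi$: continuous $w:C\times_XE\to E$ (fiber product over $\alpha$, $p$) with $p(w(c,z))=\beta(c)$, $w(cd,z)=w(c,w(d,z))$, $w(c^{-1},w(c,z))=z$, $w(c,zg)=w(c,z)g$. Gauge group $\mathcal G$: $G$-equivariant homeomorphisms $\chi$ of $E$ with $p\chi=p$. $\mathcal R(\Omega_C,G)$: continuous homomorphisms. Let $\gamma:E\times_XE\to G$ be defined by $y=z\gamma(y,z)$ and $\mathcal V_G$ the set of open symmetric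 neighbourhoods of $e$. Fundamental entourages: for $\mathbf U_{\mathcal G}$, $\{(\chi,\tilde\chi):\gamma(\chi(z),\tilde\chi(z))\in V\ \forall z\in p^{-1}(K)\}$ ($K\subset X$ compact); for $\mathbf U_{\mathcal R(C,\xi)}$, $\{(w,\tilde w):\gamma(w(c,z),\tilde w(c,z))\in V\ \forall(c,z)\in L\times_XE\}$ ($L\subset C$ compact); for $\mathbf U_{\mathcal R}$, $\{(h,\tilde h):\tilde h(c)h(c^{-1})\in V\ \forall c\in K\}$ ($K\subset\Omega_C$ compact); always $V\in\mathcal V_G$. *)

From HB Require Import structures.
From mathcomp Require Import all_boot all_order all_algebra.
From mathcomp Require Import all_classical all_reals all_analysis.
From mathcomp Require Import Rstruct Rstruct_topology.
Set Implicit Arguments. Unset Strict Implicit. Unset Printing Implicit Defensive.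
Import Order.TTheory GRing.Theory Num.Theory.
Local Open Scope classical_set_scope.
Local Open Scope ring_scope.

Definition is_topological_group (G : topologicalType)
  (mul : G -> G -> G) (inv : G -> G) (e : G) : Prop :=
  [/\ (forall a b c, mul (mul a b) c = mul a (mul b c)),
      (forall a, mul e a = a /\ mul a e = a),
      (forall a, mul (inv a) a = e /\ mul a (inv a) = e),
      continuous (fun gh : G * G => mul gh.1 gh.2) &
      continuous inv].

Definition is_SIN (G : topologicalType) (mul : G -> G -> G) (inv : G -> G) (e : G)
  : Prop :=
  forall N, nbhs e N -> exists V, [/\ nbhs e V, V `<=` N &
     forall g h, V h -> V (mul (mul g h) (inv g))].

Definition VG (G : topologicalType) (inv : G -> G) (e : G) : set (set G) :=
  [set V | [/\ open V, V e & forall g, V g -> V (inv g)]].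

(** xi is trivial over U: a G-equivariant homeomorphism U x G ~ p^-1(U) over U,
    given by phi and its inverse z |-> (p z, psi z). *)
Definition trivial_over (G X E : topologicalType) (mul : G -> G -> G)
  (act : E -> G -> E) (p : E -> X) (U : set X) : Prop :=
  exists (phi : X -> G -> E) (psi : E -> G),
  [/\ (forall x g, U x -> p (phi x g) = x) /\
      (forall x g h, U x -> phi x (mul g h) = act (phi x g) h),
      (forall x g, U x -> psi (phi x g) = g),
      (forall z, U (p z) -> phi (p z) (psi z) = z),
      {within [set xg : X * G | U xg.1], continuous (fun xg => phi xg.1 xg.2)} &
      {within p @^-1` U, continuous psi}].

Definition numerably_trivial (G X E : topologicalType) (mul : G -> G -> G)
  (act : E -> G -> E) (p : E -> X) : Prop :=
  exists (J : choiceType) (u : J -> X -> Rdefinitions.R),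
  [/\ (forall j, continuous (u j)),
      (forall j x, 0 <= u j x),
      (forall x : X, exists2 N : set X, nbhs x N &
          finite_set [set j | exists2 y, N y & u j y != 0]),
      (forall x, \sum_(j \in [set j | u j x != 0]) u j x = 1) &
      (forall j, trivial_over mul act p [set x | 0 < u j x])].

Definition numerable_principal_bundle (G X E : topologicalType)
  (mul : G -> G -> G) (e : G) (act : E -> G -> E) (p : E -> X) : Prop :=
  [/\ continuous p /\
      continuous (fun zg : E * G => act zg.1 zg.2),
      (forall z, act z e = z),
      (forall z g h, act (act z g) h = act z (mul g h)),
      (forall z g, p (act z g) = p z) &
      numerably_trivial mul act p].

(** "gamma(y, z) in V", where y = z gamma(y,z) (gamma is unique by freeness) *)
Definition gamma_in (G E : Type) (act : E -> G -> E) (V : set G) (y z : E) : Prop :=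
  exists2 g, V g & y = act z g.

Definition is_X_groupoid (X C : topologicalType) (alpha beta : C -> X)
  (comp : C -> C -> C) (unit : X -> C) (cinv : C -> C) : Prop :=
  [/\ continuous alpha /\ continuous beta,
      {within [set cd : C * C | alpha cd.1 = beta cd.2],
         continuous (fun cd => comp cd.1 cd.2)},
      (forall c d, alpha c = beta d ->
          alpha (comp c d) = alpha d /\ beta (comp c d) = beta c),
      (forall a b c, alpha a = beta b -> alpha b = beta c ->
          comp (comp a b) c = comp a (comp b c)) &
      [/\ [/\ continuous unit, (forall x, alpha (unit x) = x /\ beta (unit x) = x),
          (forall c, comp c (unit (alpha c)) = c) &
          (forall c, comp (unit (beta c)) c = c)] &
      [/\ continuous cinv,
          (forall c, alpha (cinv c) = beta c /\ beta (cinv c) = alpha c),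
          (forall c, comp (cinv c) c = unit (alpha c)) &
          (forall c, comp c (cinv c) = unit (beta c))]]].

Definition fibprod (X C E : Type) (alpha : C -> X) (p : E -> X) : set (C * E) :=
  [set ce | alpha ce.1 = p ce.2].

Definition vertex (X C : Type) (alpha beta : C -> X) (x0 : X) : set C :=
  [set c | alpha c = x0 /\ beta c = x0].

Definition gauge_group (G X E : topologicalType) (act : E -> G -> E) (p : E -> X)
  : set (E -> E) :=
  [set chi | [/\ continuous chi,
     (exists2 chi' : E -> E, continuous chi' & cancel chi chi' /\ cancel chi' chi),
     (forall z g, chi (act z g) = act (chi z) g) &
     (forall z, p (chi z) = p z)]].

Definition representations (G X C E : topologicalType) (act : E -> G -> E)
  (p : E -> X) (alpha beta : C -> X) (comp : C -> C -> C) (cinv : C -> C)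
  : set (set_type (fibprod alpha p) -> E) :=
  let FP := set_type (fibprod alpha p) in
  [set w : FP -> E | [/\ continuous w,
     (forall x : FP, p (w x) = beta (\val x).1),
     (forall x y t : FP, (\val y).2 = w t ->
         \val x = (comp (\val y).1 (\val t).1, (\val t).2) -> w x = w y),
     (forall x y : FP, (\val y).1 = cinv (\val x).1 -> (\val y).2 = w x ->
         w y = (\val x).2) &
     (forall (x y : FP) g, \val y = ((\val x).1, act (\val x).2 g) ->
         w y = act (w x) g)]].

Definition hom_reps (G X C : topologicalType) (mul : G -> G -> G)
  (alpha beta : C -> X) (comp : C -> C -> C) (x0 : X)
  : set (set_type (vertex alpha beta x0) -> G) :=
  let Om := set_type (vertex alpha beta x0) in
  [set h : Om -> G | continuous h /\
     (forall a b c : Om, \val c = comp (\val a) (\val b) -> h c = mul (h a) (h b))].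

Definition ent_gauge (G X E : topologicalType) (inv : G -> G) (e : G)
  (act : E -> G -> E) (p : E -> X) : set (set ((E -> E) * (E -> E))) :=
  [set D | exists (K : set X) V, [/\ compact K, VG inv e V &
     D = [set cc | forall z : E, K (p z) -> gamma_in act V (cc.1 z) (cc.2 z)]]].

Definition ent_rep (G X C E : topologicalType) (inv : G -> G) (e : G)
  (act : E -> G -> E) (p : E -> X) (alpha : C -> X)
  : set (set ((set_type (fibprod alpha p) -> E) * (set_type (fibprod alpha p) -> E))) :=
  [set D | exists (L : set C) V, [/\ compact L, VG inv e V &
     D = [set ww | forall x : set_type (fibprod alpha p), L (\val x).1 -> gamma_in act V (ww.1 x) (ww.2 x)]]].

Definition ent_hom (G X C : topologicalType) (mul : G -> G -> G) (inv : G -> G)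
  (e : G) (alpha beta : C -> X) (cinv : C -> C) (x0 : X)
  : set (set ((set_type (vertex alpha beta x0) -> G) *
              (set_type (vertex alpha beta x0) -> G))) :=
  [set D | exists (K : set (set_type (vertex alpha beta x0))) V,
     [/\ compact K, VG inv e V &
     D = [set hh | forall c c' : set_type (vertex alpha beta x0), K c -> \val c' = cinv (\val c) ->
                                V (mul (hh.2 c) (hh.1 c'))]]].

Definition unif_open (T : Type) (S : set T) (ents : set (set (T * T)))
  (W : set T) : Prop :=
  W `<=` S /\ forall x, W x -> exists2 D, ents D & [set y | S y /\ D (x, y)] `<=` W.

Definition co_open (A B : topologicalType) (S : set (A -> B)) (W : set (A -> B))
  : Prop :=
  exists2 O : set {compact-open, A -> B}, open O & W = O `&` S.

Arguments representations {G X C E} act p alpha beta comp cinv _.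
Arguments hom_reps {G X C} mul alpha beta comp x0 _.
Arguments ent_rep {G X C E} inv e act p alpha _.
Arguments ent_hom {G X C} mul inv e alpha beta cinv x0 _.

From HB Require Import structures.
From mathcomp Require Import all_boot all_order all_algebra.
From mathcomp Require Import all_classical all_reals all_analysis.
From mathcomp Require Import Rstruct Rstruct_topology.
Local Open Scope classical_set_scope.

(* A uniform structure and the compact-open topology induce the same topology
   on a set S of maps as soon as every entourage-neighbourhood of f in S is a
   compact-open neighbourhood and every subbasic set [K, O] around f contains an
   entourage-neighbourhood.  The second condition is a tube lemma for the action
   of G on the compact set f(K).  For the first, over a trivialising open set the
   G-coordinates along a local section of a map g close to f (compact-open) are
   uniformly close to those of f on compacta, because G is regular.  By
   equivariance every point of a fibre is a translate of the section point, and
   translating by a group element moves [gamma] by a conjugation; the SIN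
   neighbourhoods absorb it.  As X is Hausdorff, every compact K is covered by
   finitely many compact pieces lying in trivialising sets. *)

Section UniformCriterion.
Context {A B : topologicalType} (S : set (A -> B))
  (ents : set (set ((A -> B) * (A -> B)))).
Hypothesis ents_nonempty : exists D, ents D.
Hypothesis ents_directed : forall D1 D2, ents D1 -> ents D2 ->
  exists2 D3, ents D3 & D3 `<=` D1 `&` D2.
Hypothesis ent_nbhs : forall f D, S f -> ents D ->
  nbhs (f : {compact-open, A -> B}) [set g | S g -> D (f, g)].
Hypothesis ent_subbasic : forall f (K : set A) (O : set B),
  S f -> compact K -> open O -> f @` K `<=` O ->
  exists2 D, ents D & forall g, S g -> D (f, g) -> g @` K `<=` O.

Lemma co_open_unif_openP W : W `<=` S -> co_open S W <-> unif_open S ents W.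
Proof.
move=> WS; split.
  case=> O oO ->; split; first by move=> ? [].
  move=> f [Of Sf].
  pose Fb : set_system {compact-open, A -> B} :=
    [set P | exists2 D, ents D & [set g | S g /\ D (f, g)] `<=` P].
  have FFb : Filter Fb.
    split.
    - by have [D0 eD0] := ents_nonempty; exists D0.
    - move=> P Q [D1 e1 s1] [D2 e2 s2]; have [D3 e3 h3] := ents_directed _ _ e1 e2.
      by exists D3 => // g [Sg /h3 [D1g D2g]]; split; [apply: s1 | apply: s2].
    - by move=> P Q PQ [D eD sD]; exists D => //; apply: subset_trans PQ.
  have : {compact-open, Fb --> f}.
    apply/compact_open_cvgP => K O' cK oO' fKO.
    have [D eD hD] := ent_subbasic _ _ _ Sf cK oO' fKO.
    by exists D => // g [Sg Dg]; apply: hD.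
  move=> /(_ O) []; first exact: open_nbhs_nbhs.
  by move=> D eD sD; exists D => // g [Sg Dg]; split => //; apply: sD.
case=> _ hW.
pose O := \bigcup_(P in [set P : set {compact-open, A -> B} | open P /\ P `&` S `<=` W]) P.
exists O; first by apply: bigcup_open => P [].
apply/seteqP; split; last by move=> g [[P [oP PW] Pg] Sg]; apply: PW.
move=> f Wf; have [D eD sD] := hW f Wf.
have := ent_nbhs _ _ (WS f Wf) eD; rewrite nbhsE => -[P [oP Pf] PD].
split; last exact: WS.
by exists P => //; split => // g [Pg Sg]; apply: sD; split => //; apply: PD.
Qed.

End UniformCriterion.

Lemma near_compact_cover {T : topologicalType} {I : Type} (F : set_system I)
    (L : set T) (P : I -> T -> Prop) : Filter F -> compact L ->
  (forall t0, L t0 -> exists2 N, nbhs t0 N &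
     \forall i \near F, forall t, L t -> N t -> P i t) ->
  \forall i \near F, forall t, L t -> P i t.
Proof.
move=> FF /compact_near_coveringP/near_covering_withinP cov local.
apply: (cov I F P FF) => t0 /local[N Nt0 near_i].
exists (N, [set i | forall t, L t -> N t -> P i t]) => //.
by move=> [t i] [/= Nt Pi] Lt; exact: Pi.
Qed.

Lemma hausdorff_compact_closed_nbhs {X : topologicalType} {K U : set X} {x : X} :
  hausdorff_space X -> compact K -> K x -> open U -> U x ->
  exists F, [/\ closed F, nbhs x F & K `&` F `<=` U].
Proof.
move=> hX cK Kx oU Ux.
have cA : compact (K `&` ~` U) by apply: compact_closedI => //; exact: open_closedC.
pose Fx := filter_from (nbhs x) closure.
have FFx : ProperFilter Fx.
  apply: filter_from_proper; last by move=> ? /nbhs_singleton/subset_closure ?; exists x.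
  apply: filter_from_filter; first by exists setT; exact: filterT.
  by move=> P Q Px Qx; exists (P `&` Q); [exact: filterI | exact: closureI].
have cov : \forall W \near powerset_filter_from Fx, K `&` ~` U `<=` (fun y => ~ W y).
  move/compact_near_coveringP: cA; apply => y [Ky nUy].
  have xy : x != y by apply/eqP => xy; apply: nUy; rewrite -xy.
  move: hX; rewrite open_hausdorff => /(_ x y xy) [[P Q] /= [Px Qy] [oP oQ /eqP PQ0]].
  have FxP : Fx (closure P).
    by exists P => //; apply: open_nbhs_nbhs; split => //; exact/set_mem.
  near=> y' W => /= Wy'.
  have : closure P y' by exact: (near (small_set_sub FxP) W).
  move=> /(_ Q) [].
    apply: open_nbhs_nbhs; split => //.
    exact: (near (open_nbhs_nbhs (conj oQ (set_mem Qy))) y').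
  by move=> z [Pz Qz]; have : (P `&` Q) z by []; rewrite PQ0.
move: cov; rewrite near_powerset_filter_fromP; last first.
  by move=> W1 W2 W12 h y Ay W1y; apply: (h y Ay); exact: W12.
case=> W [N nN NW] AW.
exists (closure N); split; first exact: closed_closure.
  by apply: filterS nN; exact: subset_closure.
move=> y [Ky clNy]; apply: contrapT => nUy.
by apply: (AW y); [split | apply: NW].
Unshelve. all: by end_near. Qed.

Section TopologicalGroup.
Context {G : topologicalType} {mul : G -> G -> G} {inv : G -> G} {e : G}.
Hypothesis TG : is_topological_group mul inv e.

Lemma tg_mulA a b c : mul (mul a b) c = mul a (mul b c).
Proof. by case: TG. Qed.

Lemma tg_mul1g a : mul e a = a. Proof. by case: TG => _ /(_ a) []. Qed.
Lemma tg_mulg1 a : mul a e = a. Proof. by case: TG => _ /(_ a) []. Qed.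
Lemma tg_mulVg a : mul (inv a) a = e. Proof. by case: TG => _ _ /(_ a) []. Qed.
Lemma tg_mulgV a : mul a (inv a) = e. Proof. by case: TG => _ _ /(_ a) []. Qed.

Lemma tg_mul_continuous : continuous (fun gh : G * G => mul gh.1 gh.2).
Proof. by case: TG. Qed.

Lemma tg_inv_continuous : continuous inv. Proof. by case: TG. Qed.

Lemma tg_mulKg a b : mul (inv a) (mul a b) = b.
Proof. by rewrite -tg_mulA tg_mulVg tg_mul1g. Qed.

Lemma tg_mulKVg a b : mul a (mul (inv a) b) = b.
Proof. by rewrite -tg_mulA tg_mulgV tg_mul1g. Qed.

Lemma tg_mulgKV a b : mul (mul b (inv a)) a = b.
Proof. by rewrite tg_mulA tg_mulVg tg_mulg1. Qed.

Lemma tg_mulI a b c : mul a b = mul a c -> b = c.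
Proof. by move=> h; rewrite -(tg_mulKg a b) h tg_mulKg. Qed.

Lemma tg_inv_uniq a b : mul a b = e -> inv a = b.
Proof. by move=> h; rewrite -(tg_mulKg a b) h tg_mulg1. Qed.

Lemma tg_invK a : inv (inv a) = a.
Proof. by apply: tg_inv_uniq; rewrite tg_mulVg. Qed.

Lemma tg_invM a b : inv (mul a b) = mul (inv b) (inv a).
Proof. by apply: tg_inv_uniq; rewrite tg_mulA -(tg_mulA b) tg_mulgV tg_mul1g tg_mulgV. Qed.

Lemma tg_inv1 : inv e = e.
Proof. by apply: tg_inv_uniq; rewrite tg_mul1g. Qed.

Lemma tg_mulr_continuous c : continuous (fun z => mul z c).
Proof.
move=> z; apply: (@continuous2_cvg _ _ _ _ _ _ id (fun=> c) mul z c).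
- exact: (tg_mul_continuous (z, c)).
- exact: cvg_id.
- exact: cvg_cst.
Qed.

Lemma open_rtranslate {V : set G} y : open V -> open [set z | V (mul z (inv y))].
Proof. by move=> oV; apply: open_comp => // x _; exact: tg_mulr_continuous. Qed.

Lemma nbhs_inv {N} : nbhs e N -> nbhs e (inv @^-1` N).
Proof. by move=> Ne; apply: tg_inv_continuous; rewrite tg_inv1. Qed.

Lemma VG_setT : VG inv e setT.
Proof. by split => //; exact: openT. Qed.

Lemma VG_setI V1 V2 : VG inv e V1 -> VG inv e V2 -> VG inv e (V1 `&` V2).
Proof.
move=> [oV1 V1e V1inv] [oV2 V2e V2inv]; split; first exact: openI.
  by split.
by move=> g [/V1inv ? /V2inv ?]; split.
Qed.

Lemma VG_nbhs {V} : VG inv e V -> nbhs e V.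
Proof. by case=> oV Ve _; apply: open_nbhs_nbhs. Qed.

Lemma nbhs_VG_sub {N} : nbhs e N -> exists2 V, VG inv e V & V `<=` N.
Proof.
rewrite nbhsE => -[ O [ oO Oe] ON].
exists (O `&` inv @^-1` O); last by move=> g [/ON].
split.
- by apply: openI => //; apply: open_comp => // x _; exact: tg_inv_continuous.
- by split => //=; rewrite tg_inv1.
- by move=> g [Og Oig]; split => //=; rewrite tg_invK.
Qed.

Lemma nbhs_VG_mul {N} : nbhs e N ->
  exists2 V, VG inv e V & forall a b, V a -> V b -> N (mul a b).
Proof.
move=> Ne; have : nbhs (e, e) ((fun gh : G * G => mul gh.1 gh.2) @^-1` N).
  by apply: tg_mul_continuous => /=; rewrite tg_mul1g.
case=> -[/= A B] [nA nB] AB.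
have [V VV VAB] := nbhs_VG_sub (filterI nA nB).
exists V => // a b Va Vb; apply: (AB (a, b)).
by split; [case: (VAB _ Va) | case: (VAB _ Vb)].
Qed.

Lemma closure_rtranslate {N} : nbhs e N -> exists2 V, VG inv e V &
  forall y, closure [set z | V (mul z (inv y))] `<=` [set z | N (mul z (inv y))].
Proof.
move=> Ne; have [V VV VN] := nbhs_VG_mul Ne; exists V => // y z clz.
have [oV Ve Vinv] := VV.
have : nbhs z [set w | V (mul w (inv z))].
  by apply: open_nbhs_nbhs; split; [exact: open_rtranslate | rewrite /= tg_mulgV].
move=> /clz [w [/= Vwy Vwz]].
have -> : mul z (inv y) = mul (inv (mul w (inv z))) (mul w (inv y)).
  by rewrite tg_invM tg_invK tg_mulA tg_mulKg.
by apply: VN => //; apply: Vinv.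
Qed.

Lemma tube_act {E : topologicalType} {act : E -> G -> E} {Z O : set E} :
  continuous (fun zg : E * G => act zg.1 zg.2) -> (forall z, act z e = z) ->
  compact Z -> open O -> Z `<=` O ->
  exists2 V, VG inv e V & forall z g, Z z -> V g -> O (act z g).
Proof.
move=> act_cont act1 cZ oO ZO.
have : \forall g \near e, Z `<=` (fun z => O (act z g)).
  move/compact_near_coveringP: cZ; apply => z Zz.
  have : nbhs (z, e) ((fun zg : E * G => act zg.1 zg.2) @^-1` O).
    apply: act_cont; apply: open_nbhs_nbhs; split => //=.
    by rewrite act1; exact: ZO.
  by case=> -[/= A B] [nA nB] AB; exists (A, B) => //= -[a b] [/= ? ?]; apply: (AB (a, b)).
by move=> /nbhs_VG_sub[V VV VO]; exists V => // z g Zz Vg; exact: VO.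
Qed.

Lemma compact_open_near_uniform {T : topologicalType} (M : set T) (k : T -> G)
    (N : set G) {I : Type} (F : set_system I) (Phi : I -> T -> G) :
  Filter F -> compact M -> {within M, continuous k} -> nbhs e N ->
  (forall M' O, compact M' -> M' `<=` M -> open O -> k @` M' `<=` O ->
     F [set i | Phi i @` M' `<=` O]) ->
  F [set i | forall t, M t -> N (mul (Phi i t) (inv (k t)))].
Proof.
move=> FF cM kc Ne Phi_cvg.
have [V3 [oV3 V3e V3inv] V3N] := nbhs_VG_mul Ne.
have [V2 [oV2 V2e _] V2cl] := closure_rtranslate (open_nbhs_nbhs (conj oV3 V3e)).
apply: (near_compact_cover F M (fun i t => N (mul (Phi i t) (inv (k t)))) FF cM) => t0 Mt0.
have k_near t B : M t -> nbhs (k t) B -> nbhs t [set s | M s -> B (k s)].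
  by move=> Mt /((subspace_continuousP _ _).1 kc t Mt).
(* G is regular, so the closed set M' on which k stays close to k t0 is a
   compact set to which the hypothesis on Phi applies. *)
pose A := M `&` [set t | V2 (mul (k t) (inv (k t0)))].
pose M' := M `&` closure A.
have cM' : compact M' by apply: compact_closedI => //; exact: closed_closure.
have kM' : k @` M' `<=` [set z | V3 (mul z (inv (k t0)))].
  move=> _ [t [Mt clt] <-]; apply: (V2cl (k t0)) => B /(k_near t _ Mt) /clt.
  by case=> s [[Ms V2s] Bs]; exists (k s); split => //; apply: Bs.
exists [set s | M s -> V2 (mul (k s) (inv (k t0)))].
  apply: (k_near _ [set z | V2 (mul z (inv (k t0)))] Mt0); apply: open_nbhs_nbhs.
  split; first exact: open_rtranslate.
  by rewrite /= tg_mulgV.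
have := Phi_cvg M' _ cM' (@subIsetl _ _ _) (open_rtranslate (k t0) oV3) kM'.
apply: filterS => i Phi_i t Mt At.
have M't : M' t by split => //; apply: subset_closure; split => //; exact: At.
have a3 : V3 (mul (Phi i t) (inv (k t0))) by apply: Phi_i; exists t.
have b3 : V3 (inv (mul (k t) (inv (k t0)))) by apply: V3inv; apply: kM'; exists t.
by have := V3N _ _ a3 b3; rewrite tg_invM tg_invK -tg_mulA tg_mulgKV.
Qed.

End TopologicalGroup.

(* [ent_gauge], [ent_rep] and [ent_hom] are all of this form. *)
Definition compact_VG_family {G Y : topologicalType} {T : Type} (inv : G -> G) (e : G)
    (ent : set Y -> set G -> set T) : set (set T) :=
  [set D | exists K V, [/\ compact K, VG inv e V & D = ent K V]].

Lemma co_open_unif_open_VGP {G A B Y : topologicalType} {inv : G -> G} {e : G}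
    (S : set (A -> B)) (ent : set Y -> set G -> set ((A -> B) * (A -> B))) :
  (forall K1 K2 V1 V2, K1 `<=` K2 -> V2 `<=` V1 -> ent K2 V2 `<=` ent K1 V1) ->
  (forall f K V, S f -> compact K -> VG inv e V ->
     nbhs (f : {compact-open, A -> B}) [set g | S g -> ent K V (f, g)]) ->
  (forall f (K : set A) (O : set B), S f -> compact K -> open O -> f @` K `<=` O ->
     exists K' V, [/\ compact K', VG inv e V &
       forall g, S g -> ent K' V (f, g) -> g @` K `<=` O]) ->
  forall W, W `<=` S -> co_open S W <-> unif_open S (compact_VG_family inv e ent) W.
Proof.
move=> ent_anti ent_nbhs ent_subbasic; apply: co_open_unif_openP.
- by exists (ent set0 setT), set0, setT; split; [exact: compact0 | exact: VG_setT |].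
- move=> _ _ [K1 [V1 [cK1 VV1 ->]]] [K2 [V2 [cK2 VV2 ->]]].
  exists (ent (K1 `|` K2) (V1 `&` V2)).
    by exists (K1 `|` K2), (V1 `&` V2); split => //; [exact: compactU | exact: VG_setI].
  move=> D hD; split; apply: ent_anti hD;
    [exact: subsetUl | exact: subIsetl | exact: subsetUr | exact: subIsetr].
- by move=> f _ Sf [K [V [cK VV ->]]]; exact: ent_nbhs.
- move=> f K O Sf cK oO fKO; have [K' [V [cK' VV hV]]] := ent_subbasic f K O Sf cK oO fKO.
  by exists (ent K' V) => //; exists K', V.
Qed.

Lemma gamma_in_sub {G E : Type} {act : E -> G -> E} {V V' : set G} {y z : E} :
  V `<=` V' -> gamma_in act V y z -> gamma_in act V' y z.
Proof. by move=> VV' [g /VV' V'g ->]; exists g. Qed.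

Section Bundle.
Context {G X E : topologicalType} {mul : G -> G -> G} {inv : G -> G} {e : G}
  {act : E -> G -> E} {p : E -> X}.
Hypothesis TG : is_topological_group mul inv e.
Hypothesis NB : numerable_principal_bundle mul e act p.

Lemma bundle_p_continuous : continuous p. Proof. by case: NB => -[]. Qed.

Lemma bundle_act_continuous : continuous (fun zg : E * G => act zg.1 zg.2).
Proof. by case: NB => -[]. Qed.

Lemma bundle_act1 z : act z e = z. Proof. by case: NB. Qed.

Lemma bundle_actM z g h : act (act z g) h = act z (mul g h). Proof. by case: NB. Qed.

Lemma gamma_in_act V a y z : (forall g h, V h -> V (mul (mul g h) (inv g))) ->
  gamma_in act V y z -> gamma_in act V (act y a) (act z a).
Proof.
move=> Vconj [g Vg ->]; exists (mul (mul (inv a) g) a).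
  by have := Vconj (inv a) g Vg; rewrite (tg_invK TG).
by rewrite !bundle_actM -(tg_mulA TG) (tg_mulKVg TG).
Qed.

Lemma gamma_in_subbasic {D : topologicalType} {f : D -> E} {K : set D} {O : set E} :
  continuous f -> compact K -> open O -> f @` K `<=` O ->
  exists2 V, VG inv e V &
    forall g, (forall z, K z -> gamma_in act V (f z) (g z)) -> g @` K `<=` O.
Proof.
move=> fc cK oO fKO.
have cfK : compact (f @` K) by apply: continuous_compact => //; exact: continuous_subspaceT.
have [V VV hV] :=
  tube_act TG bundle_act_continuous bundle_act1 cfK oO fKO.
exists V => // g hg _ [z Kz <-].
have [h Vh fz] := hg z Kz.
have -> : g z = act (f z) (inv h).
  by rewrite fz bundle_actM (tg_mulgV TG) bundle_act1.
by apply: hV; [exists z | case: VV => _ _; apply].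
Qed.

Definition trivialization (U : set X) (phi : X -> G -> E) (psi : E -> G) :=
  [/\ open U, (forall y g, U y -> p (phi y g) = y),
      (forall y g h, U y -> phi y (mul g h) = act (phi y g) h),
      (forall z, U (p z) -> phi (p z) (psi z) = z) &
      {in [set yg : X * G | U yg.1], continuous (fun yg => phi yg.1 yg.2)} /\
      {in p @^-1` U, continuous psi}].

Lemma exists_trivialization x : exists U phi psi, U x /\ trivialization U phi psi.
Proof.
case: NB => _ _ _ _ [J [u [uc u0 _ u1 utriv]]].
have [j ujx] : exists j, u j x != 0%R.
  apply: contrapT => /forallNP hj.
  have : [set j | u j x != 0%R] = set0.
    by apply/seteqP; split => // j /= /negP; apply; apply/negP => /eqP /(hj j).
  by move/(_ x): u1 => /[swap] ->; rewrite fsbig_set0 => /esym/eqP; rewrite GRing.oner_eq0.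
pose U := [set y | (0 < u j y)%R].
have oU : open U by apply: (@open_comp _ _ (u j) [set r | (0 < r)%R]) => // y _; exact: uc.
have [phi [psi [[pphi phiM] _ phipsi phic psic]]] := utriv j.
exists U, phi, psi; split; first by rewrite /U /= Num.Theory.lt0r ujx u0.
split => //; split.
- rewrite -continuous_open_subspace //.
  by apply: (@open_comp _ _ fst) => // xg _; exact: cvg_fst.
- rewrite -continuous_open_subspace //.
  by apply: (@open_comp _ _ p) => // xg _; exact: bundle_p_continuous.
Qed.

Section Trivialization.
Context {U : set X} {phi : X -> G -> E} {psi : E -> G} (T : trivialization U phi psi).

Lemma trivialization_open : open U. Proof. by case: T. Qed.

Lemma trivialization_p y g : U y -> p (phi y g) = y.
Proof. by case: T => _ h *; exact: h. Qed.

Lemma trivialization_M y g h : U y -> phi y (mul g h) = act (phi y g) h.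
Proof. by case: T => _ _ hh *; exact: hh. Qed.

Lemma trivialization_phi_psi z : U (p z) -> phi (p z) (psi z) = z.
Proof. by case: T => _ _ _ hh *; exact: hh. Qed.

Lemma trivialization_psi_continuous z : U (p z) -> {for z, continuous psi}.
Proof. by case: T => _ _ _ _ [_ hh] Uz; apply: hh; rewrite inE. Qed.

Lemma trivialization_section_continuous :
  {in U, continuous (fun y => phi y e)}.
Proof.
move=> y; rewrite inE => Uy.
apply: (@continuous_comp _ _ _ (fun y => (y, e)) (fun yg : X * G => phi yg.1 yg.2)).
  by apply: cvg_pair; [exact: cvg_id | exact: cvg_cst].
by case: T => _ _ _ _ [hh _]; apply: hh; rewrite inE.
Qed.

Lemma trivialization_decomp z : U (p z) -> z = act (phi (p z) e) (psi z).
Proof. by move=> Uz; rewrite -trivialization_M // (tg_mul1g TG) trivialization_phi_psi. Qed.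

Lemma trivialization_gamma z z' : U (p z) -> p z' = p z ->
  z = act z' (mul (inv (psi z')) (psi z)).
Proof.
move=> Uz pz'.
have z'E : z' = phi (p z) (psi z') by rewrite -pz' trivialization_phi_psi // pz'.
by rewrite {1}z'E -trivialization_M // (tg_mulKVg TG) trivialization_phi_psi.
Qed.

Lemma open_trivialization_psi (O : set G) : open O -> open (p @^-1` U `&` psi @^-1` O).
Proof.
move=> oO; have oU' : open (p @^-1` U).
  apply: open_comp trivialization_open => z _; exact: bundle_p_continuous.
apply: (continuous_inP _ oU').1 => // z; rewrite inE => Uz.
exact: trivialization_psi_continuous.
Qed.

Lemma near_trivialization_uniform {Y D : topologicalType} {M : set Y} {sec : Y -> D}
    {f : D -> E} {N : set G} :
  compact M -> {within M, continuous sec} -> continuous f ->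
  (forall t, M t -> U (p (f (sec t)))) -> nbhs e N ->
  \forall g \near (f : {compact-open, D -> E}),
    forall t, M t -> N (mul (psi (g (sec t))) (inv (psi (f (sec t))))).
Proof.
move=> cM secc fc MU Ne.
apply: (compact_open_near_uniform TG M (fun t => psi (f (sec t))) N _
  (fun g t => psi (g (sec t)))) => //.
  apply: (within_continuous_comp M sec (psi \o f)) => // _ /[!inE] -[t Mt <-].
  apply: continuous_comp; first exact: fc.
  exact: trivialization_psi_continuous (MU t Mt).
move=> M' O cM' M'M oO kO.
have cQ : compact (sec @` M').
  by apply: continuous_compact => //; exact: continuous_subspaceW M'M secc.
have : nbhs (f : {compact-open, D -> E})
    [set g | g @` (sec @` M') `<=` p @^-1` U `&` psi @^-1` O].
  apply: open_nbhs_nbhs; split.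
    by apply: compact_open_open => //; exact: open_trivialization_psi.
  by move=> _ [_ [t M't <-] <-]; split; [exact/MU/M'M | apply: kO; exists t].
by apply: filterS => g h _ [t M't <-]; case: (h _ (imageP g (imageP sec M't))).
Qed.

Lemma near_gamma_in_trivialization {Y D : topologicalType} (q : D -> Y)
    (S : set (D -> E)) (M : set Y) (sec : Y -> D) (f : D -> E) (V : set G) :
  (forall g h, V h -> V (mul (mul g h) (inv g))) -> nbhs e V ->
  S f -> continuous f -> compact M -> {within M, continuous sec} ->
  (forall t, M t -> U (p (f (sec t)))) ->
  (forall g t, S g -> M t -> p (g (sec t)) = p (f (sec t))) ->
  (forall x, M (q x) -> exists a, forall g, S g -> g x = act (g (sec (q x))) a) ->
  \forall g \near (f : {compact-open, D -> E}),
    forall x, M (q x) -> S g -> gamma_in act V (f x) (g x).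
Proof.
move=> Vconj Ve Sf fc cM secc MU pS orbit.
have := near_trivialization_uniform cM secc fc MU (nbhs_inv TG Ve).
apply: filterS => g near_g x Mx Sg.
have [a ha] := orbit x Mx; rewrite (ha f Sf) (ha g Sg); apply: gamma_in_act => //.
set y := f (sec (q x)); set y' := g (sec (q x)).
(* [psi y'^-1 * psi y] conjugates the inverse of the small element of near_g. *)
exists (mul (inv (psi y')) (psi y)); last first.
  by apply: trivialization_gamma; [exact: MU | exact: pS].
have := Vconj (inv (psi y')) _ (near_g _ Mx).
by rewrite (tg_invM TG) !(tg_invK TG) -(tg_mulA TG) (tg_mulgKV TG).
Qed.

End Trivialization.
End Bundle.

Section GaugeGroup.
Context {G X E : topologicalType} {mul : G -> G -> G} {inv : G -> G} {e : G}
  {act : E -> G -> E} {p : E -> X}.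
Hypothesis TG : is_topological_group mul inv e.
Hypothesis SIN : is_SIN mul inv e.
Hypothesis hX : hausdorff_space X.
Hypothesis NB : numerable_principal_bundle mul e act p.

Lemma gauge_near_gamma_in {f K V} : gauge_group act p f -> compact K -> nbhs e V ->
  \forall g \near (f : {compact-open, E -> E}),
    gauge_group act p g -> forall z, K (p z) -> gamma_in act V (f z) (g z).
Proof.
move=> Sf cK Ve.
have [V0 [V0e V0V V0conj]] := SIN _ Ve.
have [fc _ _ fp] := Sf.
have near_V0 : \forall g \near (f : {compact-open, E -> E}), forall x, K x ->
    forall z, p z = x -> gauge_group act p g -> gamma_in act V0 (f z) (g z).
  apply: (near_compact_cover (nbhs (f : {compact-open, E -> E})) K
    (fun g x => forall z, p z = x -> gauge_group act p g -> gamma_in act V0 (f z) (g z)))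
    => // x0 Kx0.
  have [U [phi [psi [Ux0 T]]]] := exists_trivialization NB x0.
  have [F [cF Fx0 KFU]] :=
    hausdorff_compact_closed_nbhs hX cK Kx0 (trivialization_open T) Ux0.
  exists F => //.
  have : \forall g \near (f : {compact-open, E -> E}), forall z, (K `&` F) (p z) ->
      gauge_group act p g -> gamma_in act V0 (f z) (g z).
    apply: (near_gamma_in_trivialization TG NB T p _ _ (fun y => phi y e))
      => //.
    - exact: compact_closedI.
    - apply: continuous_subspaceW KFU _; apply: continuous_in_subspaceT.
      exact: (trivialization_section_continuous T).
    - by move=> y KFy; rewrite fp (trivialization_p T) //; exact: KFU.
    - by move=> g y [_ _ _ gp] _; rewrite gp fp.
    - move=> z /KFU Uz; exists (psi z) => g [_ _ gequi _].
      by rewrite {1}(trivialization_decomp TG T _ Uz) gequi.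
  by apply: filterS => g near_g x Kx Fx z pz; apply: near_g; rewrite pz.
apply: filterS near_V0 => g near_g Sg z Kz.
by apply: gamma_in_sub V0V _; exact: near_g _ Kz z erefl Sg.
Qed.

Lemma gauge_co_open_unif_openP W : W `<=` gauge_group act p ->
  co_open (gauge_group act p) W <-> unif_open (gauge_group act p) (ent_gauge inv e act p) W.
Proof.
apply: (co_open_unif_open_VGP (gauge_group act p)
  (fun K V => [set cc | forall z, K (p z) -> gamma_in act V (cc.1 z) (cc.2 z)])).
- by move=> K1 K2 V1 V2 K12 V21 cc h z /K12 /h; exact: gamma_in_sub.
- move=> f K V Sf cK VV; apply: filterS (gauge_near_gamma_in Sf cK (VG_nbhs VV)).
  by move=> g h Sg; exact: h.
- move=> f K O [fc _ _ _] cK oO fKO.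
  have [V VV hV] := gamma_in_subbasic TG NB fc cK oO fKO.
  exists (p @` K), V; split => //.
    apply: continuous_compact => //; apply: continuous_subspaceT.
    exact: (bundle_p_continuous NB).
  by move=> g _ hg; apply: hV => z Kz; apply: hg; exists z.
Qed.

End GaugeGroup.

Lemma within_continuous_set_type {T U : topologicalType} {A : set U} {M : set T}
    {s : T -> set_type A} :
  {within M, continuous (fun t => \val (s t))} -> {within M, continuous s}.
Proof.
move=> h.
exact: (@continuous_comp_initial (set_type A) (subspace M) U set_val (from_subspace M s) h).
Qed.

Section Representations.
Context {G X E C : topologicalType} {mul : G -> G -> G} {inv : G -> G} {e : G}
  {act : E -> G -> E} {p : E -> X} {alpha beta : C -> X} {comp : C -> C -> C}
  {unit : X -> C} {cinv : C -> C}.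
Hypothesis TG : is_topological_group mul inv e.
Hypothesis SIN : is_SIN mul inv e.
Hypothesis hX : hausdorff_space X.
Hypothesis NB : numerable_principal_bundle mul e act p.
Hypothesis GP : is_X_groupoid alpha beta comp unit cinv.

Let FP := set_type (fibprod alpha p).
Let S := representations act p alpha beta comp cinv.

Lemma groupoid_alpha_continuous : continuous alpha. Proof. by case: GP => -[]. Qed.
Lemma groupoid_beta_continuous : continuous beta. Proof. by case: GP => -[]. Qed.

Lemma fibprod_fst_continuous : continuous (fun x : FP => (\val x).1).
Proof.
move=> x; apply: (@continuous_comp _ _ _ (set_val : FP -> C * E) fst).
  exact: initial_continuous.
exact: cvg_fst.
Qed.

Lemma exists_fibprod_section {U phi psi}
    (T : trivialization (mul := mul) (act := act) (p := p) U phi psi) {c0 : C} :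
  U (alpha c0) -> exists sec : C -> FP, {within alpha @^-1` U, continuous sec} /\
    forall c, U (alpha c) -> \val (sec c) = (c, phi (alpha c) e).
Proof.
move=> Uc0.
have mem_sec c : U (alpha c) -> (c, phi (alpha c) e) \in fibprod alpha p.
  by move=> Uc; apply: mem_set; rewrite /fibprod /= (trivialization_p T).
pose pt c (Uc : U (alpha c)) : FP :=
  @exist _ (fun q => q \in fibprod alpha p) _ (mem_sec c Uc).
(* Off [alpha @^-1` U] the section is an arbitrary constant; only its values
   over [alpha @^-1` U] are used. *)
pose sec c := match pselect (U (alpha c)) with
  | left Uc => pt c Uc | right _ => pt c0 Uc0 end.
have secE c : U (alpha c) -> \val (sec c) = (c, phi (alpha c) e).
  by move=> Uc; rewrite /sec; case: pselect.
exists sec; split => //.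
apply: within_continuous_set_type.
apply: (@subspace_eq_continuous C (alpha @^-1` U) _
  (from_subspace _ (fun c => (c, phi (alpha c) e)))).
  by move=> c /[!inE] Uc; rewrite /from_subspace /= secE.
apply: continuous_in_subspaceT => c /[!inE] Uc.
apply: cvg_pair; first exact: cvg_id.
apply: (@continuous_comp _ _ _ alpha (fun y => phi y e)).
  exact: groupoid_alpha_continuous.
by apply: (trivialization_section_continuous T); rewrite inE.
Qed.

Lemma rep_near_gamma_in {f L V} : S f -> compact L -> nbhs e V ->
  \forall g \near (f : {compact-open, FP -> E}),
    S g -> forall x : FP, L (\val x).1 -> gamma_in act V (f x) (g x).
Proof.
move=> Sf cL Ve.
have [V0 [V0e V0V V0conj]] := SIN _ Ve.
have [fc fp _ _ _] := Sf.
have near_V0 : \forall g \near (f : {compact-open, FP -> E}), forall c, L c ->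
    forall x : FP, (\val x).1 = c -> S g -> gamma_in act V0 (f x) (g x).
  apply: (near_compact_cover (nbhs (f : {compact-open, FP -> E})) L
    (fun g c => forall x : FP, (\val x).1 = c -> S g -> gamma_in act V0 (f x) (g x)))
    => // c0 Lc0.
  have [U1 [phi1 [psi1 [U1c0 T1]]]] := exists_trivialization NB (alpha c0).
  have [U2 [phi2 [psi2 [U2c0 T2]]]] := exists_trivialization NB (beta c0).
  have [F1 [cF1 F1c0 KF1U]] := hausdorff_compact_closed_nbhs hX
    (continuous_compact (continuous_subspaceT groupoid_alpha_continuous) cL)
    (imageP _ Lc0) (trivialization_open T1) U1c0.
  have [F2 [cF2 F2c0 KF2U]] := hausdorff_compact_closed_nbhs hX
    (continuous_compact (continuous_subspaceT groupoid_beta_continuous) cL)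
    (imageP _ Lc0) (trivialization_open T2) U2c0.
  have [sec [secc secE]] := exists_fibprod_section T1 U1c0.
  pose M := L `&` (alpha @^-1` F1 `&` beta @^-1` F2).
  have MU1 c : M c -> U1 (alpha c).
    by case=> Lc [F1c _]; apply: KF1U; split => //; exists c.
  have MU2 c : M c -> U2 (beta c).
    by case=> Lc [_ F2c]; apply: KF2U; split => //; exists c.
  have fsecp c : M c -> p (f (sec c)) = beta c.
    by move=> Mc; rewrite fp secE //; exact: MU1.
  exists (alpha @^-1` F1 `&` beta @^-1` F2).
    by apply: filterI; [exact: groupoid_alpha_continuous | exact: groupoid_beta_continuous].
  have : \forall g \near (f : {compact-open, FP -> E}), forall x : FP, M (\val x).1 ->
      S g -> gamma_in act V0 (f x) (g x).
    apply: (near_gamma_in_trivialization TG NB T2 (fun x : FP => (\val x).1) _ _ sec)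
      => //.
    - apply: compact_closedI cL _; apply: closedI.
        by apply: preimage_closed => // c _; exact: groupoid_alpha_continuous.
      by apply: preimage_closed => // c _; exact: groupoid_beta_continuous.
    - exact: continuous_subspaceW MU1 secc.
    - by move=> c Mc; rewrite fsecp //; exact: MU2.
    - by move=> g c [_ gp _ _ _] Mc; rewrite gp fp.
    - move=> x Mx; set c := (\val x).1; set z := (\val x).2.
      have pz : p z = alpha c by have := set_valP x; rewrite /fibprod => ->.
      exists (psi1 z) => g [_ _ _ _ gequi]; apply: gequi.
      rewrite secE /=; last exact: MU1.
      rewrite [LHS]surjective_pairing; congr pair.
      by rewrite -pz; apply: (trivialization_decomp TG T1); rewrite pz; exact: MU1.
  by apply: filterS => g near_g c Lc Nc x xc; apply: near_g; rewrite xc.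
apply: filterS near_V0 => g near_g Sg x Lx.
by apply: gamma_in_sub V0V _; exact: near_g _ Lx x erefl Sg.
Qed.

Lemma rep_co_open_unif_openP W : W `<=` S ->
  co_open S W <-> unif_open S (ent_rep inv e act p alpha) W.
Proof.
apply: (co_open_unif_open_VGP S (fun K V =>
  [set ww | forall x : FP, K (\val x).1 -> gamma_in act V (ww.1 x) (ww.2 x)])).
- by move=> K1 K2 V1 V2 K12 V21 ww h x /K12 /h; exact: gamma_in_sub.
- move=> f K V Sf cK VV; apply: filterS (rep_near_gamma_in Sf cK (VG_nbhs VV)).
  by move=> g h Sg; exact: h.
- move=> f K O [fc _ _ _ _] cK oO fKO.
  have [V VV hV] := gamma_in_subbasic TG NB fc cK oO fKO.
  exists ((fun x : FP => (\val x).1) @` K), V; split => //.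
    apply: continuous_compact => //; apply: continuous_subspaceT.
    exact: fibprod_fst_continuous.
  by move=> g _ hg; apply: hV => x Kx; apply: hg; exists x.
Qed.

End Representations.

Section VertexGroupHoms.
Context {G : topologicalType} {mul : G -> G -> G} {inv : G -> G} {e : G}.
Hypothesis TG : is_topological_group mul inv e.
Context {X C : topologicalType} {alpha beta : C -> X} {comp : C -> C -> C}
  {unit : X -> C} {cinv : C -> C} (x0 : X).
Hypothesis GP : is_X_groupoid alpha beta comp unit cinv.

Let Om := set_type (vertex alpha beta x0).
Let S := hom_reps mul alpha beta comp x0.

Lemma vertex_cinv (c : Om) : vertex alpha beta x0 (cinv (\val c)).
Proof.
have [alpha_c beta_c] := set_valP c.
case: GP => _ _ _ _ [_ [_ /(_ (\val c)) [h1 h2] _ _]].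
by rewrite /vertex /= h1 h2.
Qed.

Lemma hom_reps_cinv {h} {c c' : Om} : S h -> \val c' = cinv (\val c) -> h c' = inv (h c).
Proof.
move=> [_ hom] cc'.
have [_ _ _ _ [[_ unit_ab unit_r _] [_ _ _ cinv_r]]] := GP.
have [ua ub] := unit_ab x0.
pose u : Om := exist _ (unit x0) (mem_set (conj ua ub)).
have hu : h u = e.
  apply: (tg_mulI TG (h u)); rewrite (tg_mulg1 TG) -(hom u u u) //=.
  by have := unit_r (unit x0); rewrite ua.
apply/esym/(tg_inv_uniq TG); rewrite -hu -(hom c c' u) //= cc' cinv_r.
by have [_ ->] := set_valP c.
Qed.

Lemma hom_co_open_unif_openP W : W `<=` S ->
  co_open S W <-> unif_open S (ent_hom mul inv e alpha beta cinv x0) W.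
Proof.
apply: (co_open_unif_open_VGP S (fun K V => [set hh | forall c c' : Om,
  K c -> \val c' = cinv (\val c) -> V (mul (hh.2 c) (hh.1 c'))])).
- by move=> K1 K2 V1 V2 K12 V21 hh h c c' /K12 /h /[apply] /V21.
- move=> f K V Sf cK VV.
  have : nbhs (f : {compact-open, Om -> G})
      [set g | forall c, K c -> V (mul (g c) (inv (f c)))].
    apply: (compact_open_near_uniform TG K f V _ id) => //.
    + by apply: continuous_subspaceT; case: Sf.
    + exact: VG_nbhs VV.
    + move=> M' O cM' _ oO fM'O; apply: open_nbhs_nbhs; split => //.
      exact: compact_open_open.
  by apply: filterS => g hg _ c c' Kc cc'; rewrite /= (hom_reps_cinv Sf cc'); exact: hg.
- move=> f K O Sf cK oO fKO.
  have lmul_cont : continuous (fun zg : G * G => mul zg.2 zg.1).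
    move=> [z g]; apply: (@continuous2_cvg _ _ _ _ _ _ snd fst mul g z).
    + exact: (tg_mul_continuous TG (g, z)).
    + exact: cvg_snd.
    + exact: cvg_fst.
  have cfK : compact (f @` K).
    by apply: continuous_compact => //; apply: continuous_subspaceT; case: Sf.
  have [V VV hV] := tube_act TG (act := fun z g => mul g z) lmul_cont (tg_mul1g TG) cfK oO fKO.
  exists K, V; split => // g Sg hg _ [c Kc <-].
  pose c' : Om := exist _ (cinv (\val c)) (mem_set (vertex_cinv c)).
  have := hV (f c) (mul (g c) (f c')) (imageP f Kc) (hg c c' Kc erefl).
  by rewrite (hom_reps_cinv Sf (erefl : \val c' = cinv (\val c))) (tg_mulgKV TG).
Qed.

End VertexGroupHoms.

Theorem proposition3p5
  (G : topologicalType) (mul : G -> G -> G) (inv : G -> G) (e : G)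
  (X E : topologicalType) (act : E -> G -> E) (p : E -> X)
  (C : topologicalType) (alpha beta : C -> X) (comp : C -> C -> C)
  (unit : X -> C) (cinv : C -> C) (x0 : X) :
  is_topological_group mul inv e ->
  is_SIN mul inv e ->
  hausdorff_space X ->
  numerable_principal_bundle mul e act p ->
  is_X_groupoid alpha beta comp unit cinv ->
  [/\ (forall W, W `<=` gauge_group act p ->
         co_open (gauge_group act p) W <->
         unif_open (gauge_group act p) (ent_gauge inv e act p) W),
      (forall W, W `<=` representations act p alpha beta comp cinv ->
         co_open (representations act p alpha beta comp cinv) W <->
         unif_open (representations act p alpha beta comp cinv)
                   (ent_rep inv e act p alpha) W) &
      (forall W, W `<=` hom_reps mul alpha beta comp x0 ->
         co_open (hom_reps mul alpha beta comp x0) W <->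
         unif_open (hom_reps mul alpha beta comp x0)
                   (ent_hom mul inv e alpha beta cinv x0) W)].
Proof.
move=> TG SIN hX NB GP; split.
- exact: (gauge_co_open_unif_openP TG SIN hX NB).
- exact: (rep_co_open_unif_openP TG SIN hX NB GP).
- exact: (hom_co_open_unif_openP TG x0 GP).
Qed.
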